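(* For a prime $p$ let $\mathrm{Aff}_1(p) = \{x \mapsto ax + b : a \in \mathbb{F}_p^\times, b \in \mathbb{F}_p\} \cong C_p \rtimes C_{p-1}$ act naturally on $\mathbb{F}_p$. Then the sequence of actions $(\mathrm{Aff}_1(p) \circlearrowright \mathbb{F}_p)_{p \geq 3}$ ($p$ ranging over odd primes) is not expanding.
   Context: For a group $G$ acting on a finite set $\Omega$ and a symmetric subset $S \subseteq G$, the Schreier graph $\mathrm{Sch}(G \circlearrowright \Omega, S)$ has vertex set $\Omega$ and an edge $(\omega, \omega^s)$ for each $\omega \in \Omega$, $s \in S$. For a finite graph $\Gamma$, $h_{ver}(\Gamma) = \min_{X \neq \emptyset, |X| \leq |V(\Gamma)|/2} |\partial_{ver}X|/|X|$, where $\partial_{ver}X$ is the set of vertices at distance exactly $1$ from $X$. A sequence of regular bounded-degree graphs with vertex counts tending to infinity is expander if $h_{ver} \geq \varepsilon$ for a fixed $\varepsilon > 0$. A sequence of transitive actions $(G_n \circlearrowright \Omega_n)$ is expanding if there are symmetric subsets $S_n \subseteq G_n$ of bounded cardinality with $(\mathrm{Sch}(G_n \circlearrowright \Omega_n, S_n))$ expander graphs. *)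

From HB Require Import structures.
From mathcomp Require Import all_boot all_order all_algebra all_fingroup.
From mathcomp Require Import reals.
Set Implicit Arguments. Unset Strict Implicit. Unset Printing Implicit Defensive.
Import Order.TTheory GRing.Theory Num.Theory.
Local Open Scope ring_scope.

Definition Aff (p : nat) : {set {perm 'F_p}} :=
  [set s : {perm 'F_p} | [exists a : 'F_p, exists b : 'F_p,
      (a != 0) && [forall x : 'F_p, s x == a * x + b]]].

Definition symmetric_set (gT : finGroupType) (S : {set gT}) : Prop :=
  forall s, s \in S -> (s^-1)%g \in S.

Definition sch_adj (T : finType) (S : {set {perm T}}) : rel T :=
  fun w w' => [exists s in S, s w == w'].

Definition vboundary (T : finType) (adj : rel T) (X : {set T}) : {set T} :=
  [set y in ~: X | [exists x in X, adj x y]].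

(* Vertex Cheeger constant
   h_ver = min_{X <> 0, |X| <= |V|/2} |dX| / |X|
   (the default #|T| is never attained as a value when there is a candidate
   set, since every ratio is < #|T|; it only matters for |V| <= 1). *)
Definition hver (R : realType) (T : finType) (adj : rel T) : R :=
  \big[Num.min/(#|T|%:R : R)]_(X : {set T} | (X != set0) && (2 * #|X| <= #|T|)%N)
     ((#|vboundary adj X|%:R : R) / (#|X|%:R)).

(* The affine groups are uniformly amenable, and this is witnessed inside
   F_p by an explicit Folner set.  Given k maps x |-> a_j x + b_j, record a
   word in them by how often each letter occurs, and how often it occurs at
   each exponent vector of the a_j; with all counts at most n these records
   form a finite set D, and evaluating the word at 0 is well defined on D.
   Appending the letter j is an injective partial map on D lying over the
   j-th map, undefined only on a proportion 2/(n+1) of D.  Hence the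
   push-forward of the counting measure of D to F_p is almost invariant, and
   by a discrete coarea argument one of its level sets has vertex boundary at
   most a fraction 1/M of its size, where M is arbitrary once n >= 2kM.  Its
   size is at most |D|, which depends only on k and n, so it is at most p/2
   for every large prime p. *)

From HB Require Import structures.
From mathcomp Require Import all_boot all_order all_algebra all_fingroup.
From mathcomp Require Import reals.
From mathcomp Require Import zify ring lra.
Set Implicit Arguments. Unset Strict Implicit. Unset Printing Implicit Defensive.
Import Order.TTheory GRing.Theory Num.Theory.

Lemma card_set_sum (T : finType) (P : pred T) :
  #|[set x | P x]| = (\sum_x P x)%N.
Proof. by rewrite -sum1dep_card big_mkcond. Qed.

Lemma leq_card_bigcup (I : Type) (T : finType) (r : seq I) (P : pred I) (A : I -> {set T}) :
  (#|\bigcup_(i <- r | P i) A i| <= \sum_(i <- r | P i) #|A i|)%N.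
Proof.
elim: r => [|i r IH]; first by rewrite !big_nil cards0.
rewrite !big_cons; case: (P i) => //.
by apply: leq_trans (leq_card_setU _ _).1 _; rewrite leq_add2l.
Qed.

Lemma sum_ord_strip (n a b : nat) :
  (\sum_(t < n) (b <= t < a) = minn a n - b)%N.
Proof.
elim: n => [|n IH]; first by rewrite big_ord0 minn0.
by rewrite big_ord_recr /= IH; case: (leqP b n) => ?; case: (ltnP n a) => ? /=; lia.
Qed.

Lemma sum_card_strips (T : finType) (n : nat) (f g : T -> nat) :
  (forall x, f x <= n)%N ->
  (\sum_(t < n) #|[set x | g x <= t < f x]| = \sum_x (f x - g x))%N.
Proof.
move=> le_f_n.
transitivity (\sum_(t < n) \sum_x (g x <= t < f x))%N.
  by apply: eq_bigr => t _; rewrite card_set_sum.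
rewrite exchange_big; apply: eq_bigr => x _.
by rewrite sum_ord_strip (minn_idPl (le_f_n x)).
Qed.

Lemma card_level_set_le (T : finType) (f : T -> nat) (t : nat) :
  (#|[set x | t < f x]| <= \sum_x f x)%N.
Proof. by rewrite card_set_sum; apply: leq_sum => x _; case: ltnP => //; lia. Qed.

Section LevelSets.
Variables (T : finType) (S : {set {perm T}}) (k : nat) (g : 'I_k -> {perm T}).
Hypothesis S_sub_g : forall s, s \in S -> exists j, s = g j.

Lemma vboundary_level_set_sub (f : T -> nat) (t : nat) :
  vboundary (sch_adj S) [set y | t < f y] \subset
  \bigcup_(j < k) g j @: [set x | f (g j x) <= t < f x].
Proof.
apply/subsetP => y; rewrite !inE -leqNgt.
case/andP=> le_fy /existsP [x /andP [lt_fx /existsP [s /andP [Ss /eqP sx_y]]]].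
have [j def_s] := S_sub_g Ss; apply/bigcupP; exists j => //.
rewrite inE in lt_fx; by rewrite -sx_y def_s imset_f // inE -def_s sx_y le_fy.
Qed.

Lemma card_vboundary_level_set (f : T -> nat) (t : nat) :
  (#|vboundary (sch_adj S) [set y | t < f y]| <=
   \sum_(j < k) #|[set x | f (g j x) <= t < f x]|)%N.
Proof.
apply: (leq_trans (subset_leq_card (vboundary_level_set_sub f t))).
apply: (leq_trans (leq_card_bigcup _ _ _)).
by apply: leq_sum => j _; apply: leq_imset_card.
Qed.

(* Discrete coarea argument: by the layer-cake formula the sizes of the level
   sets add up to the mass of [f], and their boundaries to at most its
   variation along the generators. *)
Lemma exists_level_set_small_boundary (f : T -> nat) (n M : nat) :
  (forall y, f y <= n)%N ->
  (M * \sum_(j < k) \sum_x (f x - f (g j x)) < \sum_x f x)%N ->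
  exists t, [set y | t < f y] != set0 /\
    (M * #|vboundary (sch_adj S) [set y | t < f y]| < #|[set y | t < f y]|)%N.
Proof.
move=> le_f_n small_var.
set X := fun t : nat => [set y | t < f y].
have [t /andP [X_ne X_small] | no_t] :=
  pickP (fun t : 'I_n => (X t != set0) && (M * #|vboundary (sch_adj S) (X t)| < #|X t|)%N).
  by exists t.
suff : (\sum_x f x <= M * \sum_(j < k) \sum_x (f x - f (g j x)))%N.
  by rewrite leqNgt small_var.
have -> : (\sum_x f x = \sum_(t < n) #|X t|)%N.
  rewrite -(eq_bigr _ (fun x _ => subn0 (f x))) -(sum_card_strips (fun _ => 0%N) le_f_n).
  by apply: eq_bigr => t _; apply: eq_card => y; rewrite !inE.
apply: (@leq_trans (\sum_(t < n) M * \sum_(j < k) #|[set x | f (g j x) <= t < f x]|)).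
  apply: leq_sum => t _; have /negbT := no_t t; rewrite negb_and negbK -leqNgt.
  case/orP=> [/eqP -> | X_big]; first by rewrite cards0.
  exact: leq_trans X_big (leq_mul (leqnn M) (card_vboundary_level_set f t)).
rewrite -big_distrr leq_mul2l exchange_big /=; apply/orP; right.
by apply: leq_sum => j _; rewrite sum_card_strips.
Qed.
End LevelSets.

Section Fibers.
Variables (D T : finType) (P : D -> T).

Definition fiber_card (y : T) : nat := #|[set d | P d == y]|.

Lemma sum_fiber_card_cond (Q : pred D) :
  (\sum_y #|[set d | (P d == y) && Q d]| = #|[set d | Q d]|)%N.
Proof.
rewrite card_set_sum (partition_big P predT) //=; apply: eq_bigr => y _.
by rewrite card_set_sum [RHS]big_mkcond; apply: eq_bigr => d _; case: eqP.
Qed.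

Lemma sum_fiber_card : (\sum_y fiber_card y = #|D|)%N.
Proof.
rewrite -cardsT -(sum_fiber_card_cond predT).
by apply: eq_bigr => y _; apply: eq_card => d; rewrite !inE andbT.
Qed.

Variables (h : T -> T) (defined : pred D) (step : D -> D).
Hypothesis P_step : forall d, defined d -> P (step d) = h (P d).
Hypothesis step_inj : {in defined &, injective step}.

Lemma fiber_card_sub_le (x : T) :
  (fiber_card x - fiber_card (h x) <= #|[set d | (P d == x) && ~~ defined d]|)%N.
Proof.
have split_fiber : (fiber_card x = #|[set d | (P d == x) && defined d]|
                                 + #|[set d | (P d == x) && ~~ defined d]|)%N.
  rewrite /fiber_card -(cardsID [set d | defined d]); congr (_ + _)%N.
    by apply: eq_card => d; rewrite !inE andbC.
  by apply: eq_card => d; rewrite !inE andbC.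
have defined_part_le : (#|[set d | (P d == x) && defined d]| <= fiber_card (h x))%N.
  rewrite -(card_in_imset (f := step)); last first.
    by move=> d1 d2; rewrite !inE => /andP [_ ?] /andP [_ ?]; apply: step_inj.
  apply/subset_leq_card/subsetP => y /imsetP [d].
  by rewrite inE => /andP [/eqP Pd def_d] ->; rewrite inE P_step // Pd.
by rewrite split_fiber; lia.
Qed.

Lemma sum_fiber_card_sub_le :
  (\sum_x (fiber_card x - fiber_card (h x)) <= #|[set d | ~~ defined d]|)%N.
Proof.
rewrite -sum_fiber_card_cond; apply: leq_sum => x _; exact: fiber_card_sub_le.
Qed.
End Fibers.

(* Apply the coarea argument to the fibre sizes of [P]: as [step j] injects
   [defined j] into the fibres over [g j], they vary little along the
   generators. *)
Lemma exists_small_boundary_of_model (T D : finType) (S : {set {perm T}}) (k M : nat)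
    (g : 'I_k -> {perm T}) (P : D -> T) (defined : 'I_k -> pred D) (step : 'I_k -> D -> D) :
  (forall s, s \in S -> exists j, s = g j) ->
  (forall j d, defined j d -> P (step j d) = g j (P d)) ->
  (forall j, {in defined j &, injective (step j)}) ->
  (M * \sum_(j < k) #|[set d | ~~ defined j d]| < #|D|)%N ->
  exists X : {set T}, [/\ X != set0, (#|X| <= #|D|)%N &
                         (M * #|vboundary (sch_adj S) X| < #|X|)%N].
Proof.
move=> S_sub_g P_step step_inj few_bad.
have fiber_le y : (fiber_card P y <= #|D|)%N by apply: max_card.
have small_var :
    (M * \sum_(j < k) \sum_x (fiber_card P x - fiber_card P (g j x))
     < \sum_x fiber_card P x)%N.
  rewrite sum_fiber_card; apply: leq_ltn_trans few_bad; rewrite leq_mul2l; apply/orP; right.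
  by apply: leq_sum => j _; apply: sum_fiber_card_sub_le (P_step j) (step_inj j).
have [t [X_ne X_small]] := exists_level_set_small_boundary S_sub_g fiber_le small_var.
exists [set y | t < fiber_card P y]; split=> //.
by rewrite -(sum_fiber_card P) card_level_set_le.
Qed.

Local Open Scope ring_scope.

Lemma hver_lt (R : realType) (T : finType) (adj : rel T) (X : {set T}) (M : nat) (eps : R) :
  0 < eps -> eps^-1 <= M%:R -> X != set0 -> (2 * #|X| <= #|T|)%N ->
  (M * #|vboundary adj X| < #|X|)%N -> hver R adj < eps.
Proof.
move=> eps_gt0 le_inv_M X_ne X_half X_small.
apply: (le_lt_trans (@bigmin_le_cond _ _ _ _ X _ _ _)); first by rewrite X_ne X_half.
rewrite ltr_pdivrMr ?ltr0n ?card_gt0 //.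
have epsM_ge1 : 1 <= eps * M%:R.
  by rewrite -[leLHS](mulfV (lt0r_neq0 eps_gt0)) ler_pM2l.
move: X_small; rewrite -(ltr_nat R) natrM.
have : (0 : R) <= #|vboundary adj X|%:R by [].
nra.
Qed.

Lemma leq_card_copies (D : finType) (L : nat) (B : pred D) (h : 'I_L -> D -> D) :
  (forall v1 v2 d1 d2, B d1 -> B d2 -> h v1 d1 = h v2 d2 -> v1 = v2 /\ d1 = d2) ->
  (L * #|[set d | B d]| <= #|D|)%N.
Proof.
move=> h_inj; pose f (x : {d | B d} * 'I_L) := h x.2 (val x.1).
have f_inj : injective f.
  move=> [[d1 Bd1] v1] [[d2 Bd2] v2]; rewrite /f /= => /h_inj-/(_ Bd1 Bd2) [-> e].
  by subst d2; rewrite (bool_irrelevance Bd1 Bd2).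
have := leq_card f f_inj; rewrite card_prod card_ord card_sig mulnC.
by rewrite (eq_card (B := [set d | B d])) // => d; rewrite inE.
Qed.

Section Update.
Variables (I : finType) (A : Type).

Definition upd (f : {ffun I -> A}) (i : I) (v : A) : {ffun I -> A} :=
  [ffun x => if x == i then v else f x].

Lemma upd_inj (f f' : {ffun I -> A}) i v v' :
  upd f i v = upd f' i v' -> v = v' /\ (forall x, x != i -> f x = f' x).
Proof.
move=> /ffunP eq_upd; split; first by have := eq_upd i; rewrite !ffunE eqxx.
by move=> x /negbTE x_neq_i; have := eq_upd x; rewrite !ffunE x_neq_i.
Qed.

Lemma upd_injl (f f' : {ffun I -> A}) i v v' :
  f i = f' i -> upd f i v = upd f' i v' -> f = f'.
Proof.
move=> eq_fi /upd_inj [_ eq_f]; apply/ffunP => x.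
by have [->|/eq_f] := eqVneq x i.
Qed.

End Update.

Section Increment.
Variables (I : finType) (n : nat).

Definition incr (f : {ffun I -> 'I_n.+1}) (i : I) : {ffun I -> 'I_n.+1} :=
  upd f i (inord (f i).+1).

Lemma incr_at (f : {ffun I -> 'I_n.+1}) i :
  f i != ord_max -> (incr f i i : nat) = (f i).+1.
Proof.
move=> f_lt; rewrite ffunE eqxx inordK //.
by move: f_lt (ltn_ord (f i)); rewrite -val_eqE /=; lia.
Qed.

Lemma incr_inj (f f' : {ffun I -> 'I_n.+1}) i :
  f i != ord_max -> f' i != ord_max -> incr f i = incr f' i -> f = f'.
Proof.
move=> f_lt f'_lt eq_incr.
have eq_fi : f i = f' i.
  by apply/val_inj/succn_inj; rewrite -(incr_at f_lt) -(incr_at f'_lt) eq_incr.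
exact: upd_injl eq_fi eq_incr.
Qed.
End Increment.

Section AffineModel.
Variables (F : fieldType) (k n : nat) (a b : 'I_k -> F).
Hypothesis a_neq0 : forall j, a j != 0.

Definition aff_exps := {ffun 'I_k -> 'I_n.+1}.
Definition aff_model := (aff_exps * {ffun 'I_k * aff_exps -> 'I_n.+1})%type.

Definition aff_pow (m : aff_exps) : F := \prod_i a i ^+ m i.

(* A point [(m, c)] of the model records a word in the maps [x |-> a j x + b j]:
   [m j] counts the letters [j], and [c (j, m')] counts the letters [j] read
   while the exponent vector was [m'].  Such a letter contributes [b j],
   multiplied by the linear parts of all later letters, i.e. by
   [a^m / (a^m' * a j)], to the value of the word at [0]. *)
Definition aff_eval (d : aff_model) : F :=
  aff_pow d.1 * \sum_(q : 'I_k * aff_exps) (d.2 q)%:R / (aff_pow q.2 * a q.1) * b q.1.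

Definition aff_step (j : 'I_k) (d : aff_model) : aff_model :=
  (incr d.1 j, incr d.2 (j, d.1)).

Definition aff_defined (j : 'I_k) : pred aff_model :=
  fun d => (d.1 j != ord_max) && (d.2 (j, d.1) != ord_max).

Lemma aff_pow_neq0 (m : aff_exps) : aff_pow m != 0.
Proof. by rewrite prodf_seq_neq0; apply/allP => i _; rewrite expf_neq0. Qed.

Lemma aff_pow_incr (m : aff_exps) (j : 'I_k) :
  m j != ord_max -> aff_pow (incr m j) = a j * aff_pow m.
Proof.
move=> m_lt; rewrite /aff_pow (bigD1 j) //= [in RHS](bigD1 j) //= incr_at // exprS -mulrA.
by congr (_ * (_ * _)); apply: eq_bigr => i /negbTE i_neq_j; rewrite ffunE i_neq_j.
Qed.

Lemma aff_eval_step (j : 'I_k) (d : aff_model) :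
  aff_defined j d -> aff_eval (aff_step j d) = a j * aff_eval d + b j.
Proof.
case: d => m c /andP [/= m_lt c_lt]; rewrite /aff_eval /aff_step /= aff_pow_incr //.
rewrite (bigD1 (j, m)) //= [in RHS](bigD1 (j, m)) //= incr_at // -natr1.
under eq_bigr => q /negbTE q_neq do rewrite ffunE q_neq.
have := aff_pow_neq0 m; have := a_neq0 j; move: (aff_pow m) (a j) => x y y_neq0 x_neq0.
by field; rewrite x_neq0 y_neq0.
Qed.

Lemma aff_step_inj j : {in aff_defined j &, injective (aff_step j)}.
Proof.
move=> [m1 c1] [m2 c2] /andP [/= m1_lt c1_lt] /andP [/= m2_lt c2_lt] [eq_m eq_c].
have def_m2 := incr_inj m1_lt m2_lt eq_m; subst m2.
by rewrite (incr_inj c1_lt c2_lt eq_c).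
Qed.

Lemma card_aff_undefined j :
  (n.+1 * #|[set d | ~~ aff_defined j d]| <= 2 * #|{: aff_model}|)%N.
Proof.
have max_exp : (n.+1 * #|[set d : aff_model | d.1 j == ord_max]| <= #|{: aff_model}|)%N.
  apply: (leq_card_copies (h := fun v d => (upd d.1 j v, d.2))).
  move=> v1 v2 [m1 c1] [m2 c2] /= /eqP m1_max /eqP m2_max [eq_m ->].
  by have [-> _] := upd_inj eq_m; rewrite (upd_injl (etrans m1_max (esym m2_max)) eq_m).
have max_count :
    (n.+1 * #|[set d : aff_model | d.2 (j, d.1) == ord_max]| <= #|{: aff_model}|)%N.
  apply: (leq_card_copies (h := fun v d => (d.1, upd d.2 (j, d.1) v))).
  move=> v1 v2 [m1 c1] [m2 c2] /= /eqP c1_max /eqP c2_max [eq_m eq_c]; subst m2.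
  by have [-> _] := upd_inj eq_c; rewrite (upd_injl (etrans c1_max (esym c2_max)) eq_c).
have undefined_sub : (#|[set d | ~~ aff_defined j d]| <=
    #|[set d : aff_model | d.1 j == ord_max]|
    + #|[set d : aff_model | d.2 (j, d.1) == ord_max]|)%N.
  apply: leq_trans (leq_card_setU _ _).1.
  by apply/subset_leq_card/subsetP => d; rewrite !inE negb_and !negbK.
by rewrite mul2n -addnn mulnC; apply: leq_trans (leq_mul undefined_sub (leqnn _)) _; lia.
Qed.

Lemma sum_card_aff_undefined (M : nat) :
  (2 * k * M <= n)%N ->
  (M * \sum_(j < k) #|[set d | ~~ aff_defined j d]| < #|{: aff_model}|)%N.
Proof.
move=> le_n.
have model_gt0 : (0 < #|{: aff_model}|)%N.
  by apply/card_gt0P; exists ([ffun=> ord0], [ffun=> ord0]).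
have sum_undefined_le : (n.+1 * \sum_(j < k) #|[set d | ~~ aff_defined j d]|
                <= k * (2 * #|{: aff_model}|))%N.
  rewrite big_distrr /= -[k in (_ <= k * _)%N]card_ord -sum_nat_const.
  by apply: leq_sum => j _; apply: card_aff_undefined.
move: sum_undefined_le; set s := (\sum_(j < k) _)%N; set D := #|_| => sum_undefined_le.
have : (n.+1 * (M * s) <= n * D)%N.
  rewrite mulnCA; apply: leq_trans (leq_mul (leqnn M) sum_undefined_le) _; nia.
rewrite ltnNge; apply: contraTN => le_D; rewrite -ltnNge.
by apply: leq_trans (leq_mul (leqnn _) le_D); rewrite ltn_pmul2r.
Qed.
End AffineModel.

Lemma enum_affine_perms (p k : nat) (S : {set {perm 'F_p}}) :
  S \subset Aff p -> (#|S| <= k)%N ->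
  exists g : 'I_k -> {perm 'F_p}, exists a : 'I_k -> 'F_p, exists b : 'I_k -> 'F_p,
    [/\ forall s, s \in S -> exists j, s = g j,
        forall j, a j != 0 & forall j x, g j x = a j * x + b j].
Proof.
move=> S_aff S_card; pose g (j : 'I_k) := nth 1%g (enum S) j.
have g_aff j : exists ab : 'F_p * 'F_p, (ab.1 != 0) && [forall x, g j x == ab.1 * x + ab.2].
  have [j_lt | j_ge_size] := ltnP j (size (enum S)).
    have /(subsetP S_aff) : g j \in S by rewrite -mem_enum mem_nth.
    by rewrite inE => /existsP [a' /existsP [b' coef]]; exists (a', b').
  rewrite /g nth_default //; exists (1, 0); rewrite oner_neq0 /=.
  by apply/forallP => x; rewrite perm1 mul1r addr0.
exists g, (fun j => (xchoose (g_aff j)).1), (fun j => (xchoose (g_aff j)).2); split.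
- move=> s Ss; have s_enum : s \in enum S by rewrite mem_enum.
  have j_lt : (index s (enum S) < k)%N by rewrite (leq_trans _ S_card) // cardE index_mem.
  by exists (Ordinal j_lt); rewrite /g nth_index.
- by move=> j; have /andP [] := xchooseP (g_aff j).
- by move=> j x; have /andP [_ /forallP/(_ x)/eqP] := xchooseP (g_aff j).
Qed.

Theorem mainTheorem3 :
  forall (R : realType) (k : nat) (eps : R),
    0 < eps ->
    forall S : forall p : nat, {set {perm 'F_p}},
      (forall p, prime p -> (2 < p)%N ->
         [/\ S p \subset Aff p, symmetric_set (S p) & (#|S p| <= k)%N]) ->
      exists p : nat, [/\ prime p, (2 < p)%N & hver R (sch_adj (S p)) < eps].
Proof.
move=> R k eps eps_gt0 S S_props.
set M := Num.Def.archi_bound eps^-1.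
have le_inv_M : eps^-1 <= M%:R by rewrite ltW // archi_boundP // invr_ge0 ltW.
set n := (2 * k * M)%N.
have [p p_big p_prime] := prime_above (maxn 2 (2 * #|{: aff_model k n}|)).
move: p_big; rewrite gtn_max => /andP [p_gt2 model_small].
exists p; split => //.
have [S_aff _ S_card] := S_props p p_prime p_gt2.
have [g [a [b [S_sub_g a_neq0 g_affine]]]] := enum_affine_perms S_aff S_card.
have eval_step j (d : aff_model k n) :
    aff_defined j d -> aff_eval a b (aff_step j d) = g j (aff_eval a b d).
  by move=> dj; rewrite aff_eval_step // g_affine.
have [X [X_ne X_card X_small]] := exists_small_boundary_of_model (M := M) S_sub_g
  eval_step (@aff_step_inj k n) (sum_card_aff_undefined (leqnn n)).
apply: hver_lt eps_gt0 le_inv_M X_ne _ X_small.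
by rewrite card_Fp // (leq_trans _ (ltnW model_small)) // leq_mul2l X_card orbT.
Qed.
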